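(* Let $M$ be a symmetric homogeneous stable mean having a symmetric asymptotic expansion with coefficients $(a_n)$. Then, as $x\to\infty$, $$M(x-t,x+t)=x+a_1t^2x^{-1}+\tfrac16a_1(1+a_1)(1-4a_1)t^4x^{-3}+\tfrac1{90}a_1(1+a_1)(6-31a_1+36a_1^2+64a_1^3)t^6x^{-5}$$ $$+\tfrac1{2520}a_1(1+a_1)\big(90-531a_1+937a_1^2+568a_1^3-3088a_1^4-2176a_1^5\big)t^8x^{-7}+O(x^{-9}).$$
   Context: A bi-variate mean is $M:(0,\infty)^2\to(0,\infty)$ with $\min(s,t)\le M(s,t)\le\max(s,t)$; symmetric: $M(s,t)=M(t,s)$; homogeneous: $M(\lambda s,\lambda t)=\lambda M(s,t)$. $M$ is stable if $M(s,t)=M\big(M(s,M(s,t)),M(M(s,t),t)\big)$ for all $s,t>0$. $M$ has a symmetric asymptotic expansion with coefficients $(a_n)$ if for every fixed real $t$ and every $N\ge0$, $M(x-t,x+t)=\sum_{n=0}^Na_nt^{2n}x^{-2n+1}+o(x^{-2N+1})$ as $x\to\infty$. *)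

From Stdlib Require Import Reals.
Open Scope R_scope.

(* A bi-variate mean on (0,oo)^2; M is a total function R -> R -> R but only
   its values on (0,oo)^2 are constrained. *)
Definition is_mean (M : R -> R -> R) : Prop :=
  forall s t, 0 < s -> 0 < t ->
    0 < M s t /\ Rmin s t <= M s t /\ M s t <= Rmax s t.

Definition symmetric_mean (M : R -> R -> R) : Prop :=
  forall s t, 0 < s -> 0 < t -> M s t = M t s.

Definition homogeneous_mean (M : R -> R -> R) : Prop :=
  forall l s t, 0 < l -> 0 < s -> 0 < t -> M (l * s) (l * t) = l * M s t.

Definition stable_mean (M : R -> R -> R) : Prop :=
  forall s t, 0 < s -> 0 < t ->
    M s t = M (M s (M s t)) (M (M s t) t).

Definition little_o_infty (f g : R -> R) : Prop :=
  forall eps, 0 < eps -> exists X, forall x, X < x -> Rabs (f x) <= eps * Rabs (g x).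

Definition big_O_infty (f g : R -> R) : Prop :=
  exists C X, forall x, X < x -> Rabs (f x) <= C * Rabs (g x).

Definition has_sym_asymp_expansion (M : R -> R -> R) (a : nat -> R) : Prop :=
  forall (t : R) (N : nat),
    little_o_infty
      (fun x => M (x - t) (x + t)
                - sum_f_R0 (fun n => a n * t ^ (2 * n) * powerRZ x (1 - 2 * Z.of_nat n)) N)
      (fun x => powerRZ x (1 - 2 * Z.of_nat N)).

From Stdlib Require Import Reals Lra Lia QArith Qreals List ZArith.
Import ListNotations.
Open Scope R_scope.

(* Put g w := M (1 - w) (1 + w).  Homogeneity turns the expansion of M (x - t) (x + t) into
   g w = 1 + a1 w^2 + a2 w^4 + a3 w^6 + a4 w^8 + O(w^10), symmetry makes g even, and
   homogeneity also gives M a b = (a + b)/2 * g ((b - a)/(a + b)).  Stability at (1 - u, 1 + u)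
   therefore writes g u as a composite of g with itself; expanding both sides to order u^10 and
   comparing the coefficients of u^4, u^6, u^8 determines a2, a3, a4 as polynomials in a1.
   The expansion of the composite, symbolic in a1..a4, is computed by reflection on truncated
   power series with polynomial coefficients, each operation carrying its O(u^10) error bound. *)

(** * Polynomials with rational coefficients *)

(* A monomial is an exponent vector, position [i] holding the exponent of variable [i]. *)
Definition mono := list nat.
Definition poly := list (mono * Q).

Fixpoint mono_eval (v : nat -> R) (i : nat) (m : mono) : R :=
  match m with [] => 1 | e :: m' => v i ^ e * mono_eval v (S i) m' end.

Definition poly_eval (v : nat -> R) (p : poly) : R :=
  fold_right (fun mc acc => Q2R (snd mc) * mono_eval v 0 (fst mc) + acc) 0 p.

Lemma poly_eval_nil v : poly_eval v [] = 0.
Proof. reflexivity. Qed.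

Lemma poly_eval_cons v m c p :
  poly_eval v ((m, c) :: p) = Q2R c * mono_eval v 0 m + poly_eval v p.
Proof. reflexivity. Qed.

Fixpoint mono_mul (m1 m2 : mono) : mono :=
  match m1, m2 with
  | [], _ => m2
  | _, [] => m1
  | e1 :: r1, e2 :: r2 => (e1 + e2)%nat :: mono_mul r1 r2
  end.

Lemma mono_eval_mul v m1 m2 i :
  mono_eval v i (mono_mul m1 m2) = mono_eval v i m1 * mono_eval v i m2.
Proof.
  revert m2 i; induction m1 as [|e1 m1 IH]; intros [|e2 m2] i; simpl; try ring.
  rewrite IH, pow_add; ring.
Qed.

Fixpoint poly_insert (m : mono) (c : Q) (p : poly) : poly :=
  match p with
  | [] => if Qeq_bool c 0 then [] else [(m, c)]
  | (m', c') :: p' =>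
      if list_eq_dec Nat.eq_dec m m' then
        let s := Qred (c + c') in if Qeq_bool s 0 then p' else (m', s) :: p'
      else (m', c') :: poly_insert m c p'
  end.

Lemma Q2R_Qeq_bool0 c : Qeq_bool c 0 = true -> Q2R c = 0.
Proof. intros H. rewrite (Qeq_eqR _ _ (Qeq_bool_eq _ _ H)). apply RMicromega.Q2R_0. Qed.

Lemma poly_eval_insert v m c p :
  poly_eval v (poly_insert m c p) = Q2R c * mono_eval v 0 m + poly_eval v p.
Proof.
  induction p as [|[m' c'] p IH]; cbn [poly_insert].
  - destruct (Qeq_bool c 0) eqn:E; cbn; [rewrite (Q2R_Qeq_bool0 _ E)|]; ring.
  - destruct (list_eq_dec Nat.eq_dec m m') as [<-|Hne]; cbn [poly_eval fold_right fst snd].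
    + assert (Es : Q2R (Qred (c + c')) = Q2R c + Q2R c')
        by now rewrite (Qeq_eqR _ _ (Qred_correct _)), Q2R_plus.
      destruct (Qeq_bool (Qred (c + c')) 0) eqn:E.
      * rewrite (Q2R_Qeq_bool0 _ E) in Es.
        replace (Q2R c) with (- Q2R c') by lra. unfold poly_eval; ring.
      * unfold poly_eval; cbn [fold_right fst snd]. rewrite Es. ring.
    + unfold poly_eval in *; cbn [fold_right fst snd]. rewrite IH. ring.
Qed.

Definition poly_add (p q : poly) : poly :=
  fold_right (fun mc acc => poly_insert (fst mc) (snd mc) acc) q p.

Lemma poly_eval_add v p q : poly_eval v (poly_add p q) = poly_eval v p + poly_eval v q.
Proof.
  induction p as [|[m c] p IH]; cbn [poly_add fold_right fst snd].
  - rewrite Rplus_0_l; reflexivity.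
  - unfold poly_add in IH. rewrite poly_eval_insert, IH, poly_eval_cons; ring.
Qed.

Definition poly_mul_term (m : mono) (c : Q) (q acc : poly) : poly :=
  fold_right (fun mc acc' => poly_insert (mono_mul m (fst mc)) (Qred (c * snd mc)) acc') acc q.

Lemma poly_eval_mul_term v m c q acc :
  poly_eval v (poly_mul_term m c q acc)
  = Q2R c * mono_eval v 0 m * poly_eval v q + poly_eval v acc.
Proof.
  induction q as [|[m' c'] q IH]; cbn [poly_mul_term fold_right fst snd].
  - rewrite !poly_eval_nil; ring.
  - unfold poly_mul_term in IH.
    rewrite poly_eval_insert, (Qeq_eqR _ _ (Qred_correct _)), Q2R_mult, mono_eval_mul, IH,
      poly_eval_cons; ring.
Qed.

Definition poly_mul (p q : poly) : poly :=
  fold_right (fun mc acc => poly_mul_term (fst mc) (snd mc) q acc) [] p.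

Lemma poly_eval_mul v p q : poly_eval v (poly_mul p q) = poly_eval v p * poly_eval v q.
Proof.
  induction p as [|[m c] p IH]; cbn [poly_mul fold_right fst snd].
  - rewrite !poly_eval_nil; ring.
  - unfold poly_mul in IH. rewrite poly_eval_mul_term, IH, poly_eval_cons; ring.
Qed.

Definition poly_const (c : Q) : poly := [([], c)].
Definition poly_var (i : nat) : poly := [(repeat 0%nat i ++ [1%nat], 1%Q)].

Lemma poly_eval_const v c : poly_eval v (poly_const c) = Q2R c.
Proof. unfold poly_const; rewrite poly_eval_cons, poly_eval_nil; cbn; ring. Qed.

Lemma poly_eval_var v i : poly_eval v (poly_var i) = v i.
Proof.
  assert (Hm : forall j, mono_eval v j (repeat 0%nat i ++ [1%nat]) = v (j + i)%nat).
  { induction i as [|i IH]; intros j; cbn.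
    - rewrite Nat.add_0_r; ring.
    - rewrite IH, Nat.add_succ_r, Rmult_1_l; reflexivity. }
  unfold poly_var; rewrite poly_eval_cons, Hm, RMicromega.Q2R_1, poly_eval_nil; simpl; ring.
Qed.

(** * Truncated power series *)

Fixpoint horner (s : list R) (u : R) : R :=
  match s with [] => 0 | c :: s' => c + u * horner s' u end.

Definition ser := list poly.

Definition ser_eval (v : nat -> R) (S : ser) (u : R) : R := horner (map (poly_eval v) S) u.

Fixpoint ser_add (S T : ser) : ser :=
  match S, T with
  | [], _ => T
  | _, [] => S
  | p :: S', q :: T' => poly_add p q :: ser_add S' T'
  end.

Definition ser_scale (c : poly) (S : ser) : ser := map (poly_mul c) S.

Definition ser_sub (S T : ser) : ser := ser_add S (ser_scale (poly_const (-1)) T).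

Fixpoint ser_mul (S T : ser) : ser :=
  match S with
  | [] => []
  | p :: S' => ser_add (ser_scale p T) ([] :: ser_mul S' T)
  end.

Definition ser_mul_trunc (n : nat) (S T : ser) : ser := firstn n (ser_mul S T).

(* Only a candidate inverse (Neumann iteration for [S] with constant term 1); it is used
   through the certificate [ser_is_one (ser_mul_trunc n S (ser_inv n S))]. *)
Definition ser_inv (n : nat) (S : ser) : ser :=
  Nat.iter n (fun X => ser_sub [poly_const 1] (ser_mul_trunc n ([] :: tl S) X)) [poly_const 1].

Definition ser_comp (n : nat) (A S : ser) : ser :=
  fold_right (fun c acc => ser_add [c] (ser_mul_trunc n S acc)) [] A.

Fixpoint ser_spread (S : ser) : ser :=
  match S with [] => [] | p :: S' => p :: [] :: ser_spread S' end.

Definition ser_is_one (S : ser) : bool :=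
  match S with
  | [([], c)] :: S' =>
      Qeq_bool c 1 && forallb (fun p => match p with [] => true | _ => false end) S'
  | _ => false
  end.

Definition ser_head_zero (S : ser) : bool :=
  match S with [] :: _ => true | _ => false end.

Lemma ser_eval_add v S T u : ser_eval v (ser_add S T) u = ser_eval v S u + ser_eval v T u.
Proof.
  revert T; unfold ser_eval; induction S as [|p S IH]; intros [|q T]; cbn; try ring.
  rewrite poly_eval_add, IH; ring.
Qed.

Lemma ser_eval_scale v c S u : ser_eval v (ser_scale c S) u = poly_eval v c * ser_eval v S u.
Proof.
  unfold ser_eval, ser_scale; induction S as [|p S IH]; cbn; [ring|].
  rewrite poly_eval_mul, IH; ring.
Qed.

Lemma ser_eval_sub v S T u : ser_eval v (ser_sub S T) u = ser_eval v S u - ser_eval v T u.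
Proof.
  unfold ser_sub. rewrite ser_eval_add, ser_eval_scale, poly_eval_const.
  unfold Q2R; cbn [Qnum Qden]. field.
Qed.

Lemma ser_eval_mul v S T u : ser_eval v (ser_mul S T) u = ser_eval v S u * ser_eval v T u.
Proof.
  induction S as [|p S IH]; cbn [ser_mul]; [cbn; ring|].
  rewrite ser_eval_add, ser_eval_scale. unfold ser_eval in *; cbn [map horner].
  rewrite IH; cbn; ring.
Qed.

Lemma ser_eval_spread v S u : ser_eval v (ser_spread S) u = ser_eval v S (u * u).
Proof.
  unfold ser_eval; induction S as [|p S IH]; cbn [ser_spread map horner]; [ring|].
  rewrite IH; cbn; ring.
Qed.

Lemma ser_eval_is_one v S u : ser_is_one S = true -> ser_eval v S u = 1.
Proof.
  destruct S as [|[|[[|e m] c] [|]] S]; try discriminate; cbn [ser_is_one].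
  intros [Hc Hz]%andb_prop.
  assert (Hrest : horner (map (poly_eval v) S) u = 0).
  { induction S as [|[|] S IH]; cbn in *; try discriminate; [easy|].
    rewrite IH by easy; ring. }
  unfold ser_eval; cbn [map horner]. rewrite Hrest.
  cbn. rewrite (Qeq_eqR _ _ (Qeq_bool_eq _ _ Hc)), RMicromega.Q2R_1. ring.
Qed.

(** * Approximation to order [u ^ n] as [u -> 0+] *)

Definition near0 (P : R -> Prop) : Prop := exists d, 0 < d /\ forall u, 0 < u < d -> P u.

Lemma near0_and (P Q : R -> Prop) : near0 P -> near0 Q -> near0 (fun u => P u /\ Q u).
Proof.
  intros [d1 [Hd1 H1]] [d2 [Hd2 H2]]. exists (Rmin d1 d2). split; [now apply Rmin_pos|].
  intros u Hu. pose proof (Rmin_l d1 d2); pose proof (Rmin_r d1 d2).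
  split; [apply H1 | apply H2]; lra.
Qed.

Lemma near0_mono (P Q : R -> Prop) : (forall u, 0 < u -> P u -> Q u) -> near0 P -> near0 Q.
Proof.
  intros HPQ [d [Hd H]]. exists d. split; [easy|]. intros u Hu. apply HPQ; [lra|]. now apply H.
Qed.

Lemma near0_lt d : 0 < d -> near0 (fun u => u < d).
Proof. intros Hd. exists d. split; [easy|]. now intros u []. Qed.

Lemma pow_le_self u n : 0 <= u <= 1 -> (0 < n)%nat -> u ^ n <= u.
Proof.
  intros Hu Hn. destruct n as [|n]; [lia|]. cbn [pow].
  assert (u ^ n <= 1) by (rewrite <- (pow1 n); apply pow_incr; lra).
  pose proof (pow_le u n ltac:(lra)). nra.
Qed.

Lemma near0_pow_small n C e : (0 < n)%nat -> 0 < e -> near0 (fun u => Rabs C * u ^ n <= e).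
Proof.
  intros Hn He. pose proof (Rabs_pos C).
  assert (Hd : 0 < e / (Rabs C + 1)) by (apply Rdiv_lt_0_compat; lra).
  apply (near0_mono (fun u => u < 1 /\ u < e / (Rabs C + 1))).
  - intros u Hu [Hu1 Hue]. pose proof (pow_le_self u n ltac:(lra) Hn).
    apply (Rmult_lt_compat_r (Rabs C + 1)) in Hue; [|lra].
    unfold Rdiv in Hue. rewrite Rmult_assoc, Rinv_l in Hue by lra. nra.
  - apply near0_and; apply near0_lt; lra.
Qed.

Lemma zero_of_near0_linear c C : near0 (fun u => Rabs c <= C * u) -> c = 0.
Proof.
  intros [d [Hd H]]. destruct (Req_dec c 0) as [|Hc]; [easy|]. exfalso.
  assert (Hac : 0 < Rabs c) by now apply Rabs_pos_lt.
  pose proof (Rabs_pos C).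
  set (u := Rmin (d / 2) (Rabs c / (2 * (Rabs C + 1)))).
  assert (Hu1 : u <= d / 2) by apply Rmin_l.
  assert (Hu2 : u <= Rabs c / (2 * (Rabs C + 1))) by apply Rmin_r.
  assert (Hu0 : 0 < u) by (apply Rmin_pos; [lra | apply Rdiv_lt_0_compat; lra]).
  specialize (H u ltac:(lra)).
  assert (C * u <= Rabs C * u) by (apply Rmult_le_compat_r; [lra | apply Rle_abs]).
  apply (Rmult_le_compat_r (2 * (Rabs C + 1))) in Hu2; [|lra].
  unfold Rdiv in Hu2. rewrite Rmult_assoc, Rinv_l in Hu2 by lra. nra.
Qed.

Definition bounded0 (h : R -> R) : Prop := exists B, near0 (fun u => Rabs (h u) <= B).

Lemma horner_bounded s : bounded0 (horner s).
Proof.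
  induction s as [|c s [B HB]].
  - exists 0. exists 1. split; [lra|]. intros u _. cbn. rewrite Rabs_R0; lra.
  - exists (Rabs c + B). generalize (near0_and _ _ HB (near0_lt 1 Rlt_0_1)).
    apply near0_mono. intros u Hu [Hs Hu1]. cbn [horner].
    eapply Rle_trans; [apply Rabs_triang|]. rewrite Rabs_mult, (Rabs_right u) by lra.
    pose proof (Rabs_pos (horner s u)). nra.
Qed.

Lemma horner_split m s u : horner s u = horner (firstn m s) u + u ^ m * horner (skipn m s) u.
Proof.
  revert s; induction m as [|m IH]; intros [|c s]; cbn; try ring.
  rewrite (IH s). ring.
Qed.

Lemma horner_coef_zero m : forall s K, near0 (fun u => Rabs (horner s u) <= K * u ^ m) ->
  forall k, (k < m)%nat -> nth k s 0 = 0.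
Proof.
  induction m as [|m IH]; intros s K H k Hk; [lia|].
  destruct s as [|c s]; [now destruct k|].
  destruct (horner_bounded s) as [B HB].
  assert (Hc : c = 0).
  { apply (zero_of_near0_linear c (Rabs K + B)).
    generalize (near0_and _ _ H (near0_and _ _ HB (near0_lt 1 Rlt_0_1))).
    apply near0_mono. intros u Hu [Hcs [Hs Hu1]]. cbn [horner] in Hcs.
    replace c with ((c + u * horner s u) - u * horner s u) by ring.
    eapply Rle_trans; [apply Rabs_triang|]. rewrite Rabs_Ropp, Rabs_mult, (Rabs_right u) by lra.
    pose proof (pow_le_self u (S m) ltac:(lra) ltac:(lia)).
    pose proof (pow_le u (S m) ltac:(lra)). pose proof (Rle_abs K). pose proof (Rabs_pos K).
    assert (K * u ^ S m <= Rabs K * u) by nra.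
    assert (u * Rabs (horner s u) <= u * B) by (apply Rmult_le_compat_l; lra).
    lra. }
  subst c. destruct k as [|k]; [reflexivity|]. cbn [nth].
  apply (IH s K); [|lia].
  revert H; apply near0_mono. intros u Hu Hs. cbn [horner pow] in Hs.
  rewrite Rplus_0_l, Rabs_mult, (Rabs_right u) in Hs by lra.
  apply (Rmult_le_reg_l u); lra.
Qed.

Section Approximation.

Variable n : nat.

Definition approx (h p : R -> R) : Prop := exists K, near0 (fun u => Rabs (h u - p u) <= K * u ^ n).

Lemma approx_refl p : approx p p.
Proof.
  exists 0. exists 1. split; [lra|]. intros u _.
  unfold Rminus; rewrite Rplus_opp_r, Rabs_R0; lra.
Qed.

Lemma approx_congr_l h h' p : near0 (fun u => h u = h' u) -> approx h p -> approx h' p.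
Proof.
  intros E [K HK]. exists K. generalize (near0_and _ _ E HK).
  apply near0_mono. intros u _ [-> Hu]. exact Hu.
Qed.

Lemma approx_congr_r h p p' : (forall u, p u = p' u) -> approx h p -> approx h p'.
Proof.
  intros E [K HK]. exists K. revert HK; apply near0_mono. intros u _. now rewrite E.
Qed.

Lemma approx_add h k p q : approx h p -> approx k q ->
  approx (fun u => h u + k u) (fun u => p u + q u).
Proof.
  intros [K1 H1] [K2 H2]. exists (K1 + K2). generalize (near0_and _ _ H1 H2).
  apply near0_mono. intros u _ [E1 E2].
  replace (h u + k u - (p u + q u)) with ((h u - p u) + (k u - q u)) by ring.
  eapply Rle_trans; [apply Rabs_triang | lra].
Qed.

Lemma approx_sub h k p q : approx h p -> approx k q ->
  approx (fun u => h u - k u) (fun u => p u - q u).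
Proof.
  intros [K1 H1] [K2 H2]. exists (K1 + K2). generalize (near0_and _ _ H1 H2).
  apply near0_mono. intros u _ [E1 E2].
  replace (h u - k u - (p u - q u)) with ((h u - p u) + - (k u - q u)) by ring.
  eapply Rle_trans; [apply Rabs_triang|]. rewrite Rabs_Ropp. lra.
Qed.

Lemma approx_scale c h p : approx h p -> approx (fun u => c * h u) (fun u => c * p u).
Proof.
  intros [K HK]. exists (Rabs c * K). revert HK; apply near0_mono. intros u _ E.
  replace (c * h u - c * p u) with (c * (h u - p u)) by ring.
  rewrite Rabs_mult, Rmult_assoc. apply Rmult_le_compat_l; [apply Rabs_pos | easy].
Qed.

Lemma approx_drop_top h p c : approx h (fun u => p u + c * u ^ n) -> approx h p.
Proof.
  intros [K HK]. exists (K + Rabs c). revert HK; apply near0_mono. intros u Hu E.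
  replace (h u - p u) with ((h u - (p u + c * u ^ n)) + c * u ^ n) by ring.
  eapply Rle_trans; [apply Rabs_triang|]. rewrite Rabs_mult.
  rewrite (Rabs_right (u ^ n)) by (apply Rle_ge, pow_le; lra). lra.
Qed.

Lemma approx_bounded h p : approx h p -> bounded0 p -> bounded0 h.
Proof.
  intros [K HK] [B HB]. exists (Rabs K + B).
  generalize (near0_and _ _ HK (near0_and _ _ HB (near0_lt 1 Rlt_0_1))).
  apply near0_mono. intros u Hu [E [Hp Hu1]].
  replace (h u) with ((h u - p u) + p u) by ring.
  eapply Rle_trans; [apply Rabs_triang|].
  assert (u ^ n <= 1) by (rewrite <- (pow1 n); apply pow_incr; lra).
  pose proof (pow_le u n ltac:(lra)). pose proof (Rle_abs K). pose proof (Rabs_pos K).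
  assert (K * u ^ n <= Rabs K) by nra. lra.
Qed.

Lemma approx_mul h k p q : approx h p -> approx k q -> bounded0 k -> bounded0 p ->
  approx (fun u => h u * k u) (fun u => p u * q u).
Proof.
  intros [K1 H1] [K2 H2] [B1 Hk] [B2 Hp]. exists (K1 * B1 + B2 * K2).
  generalize (near0_and _ _ (near0_and _ _ H1 H2) (near0_and _ _ Hk Hp)).
  apply near0_mono. intros u Hu [[E1 E2] [Ek Ep]].
  replace (h u * k u - p u * q u) with ((h u - p u) * k u + p u * (k u - q u)) by ring.
  eapply Rle_trans; [apply Rabs_triang|]. rewrite !Rabs_mult.
  pose proof (Rabs_pos (h u - p u)); pose proof (Rabs_pos (k u));
  pose proof (Rabs_pos (p u)); pose proof (Rabs_pos (k u - q u)).
  assert (Rabs (h u - p u) * Rabs (k u) <= K1 * u ^ n * B1) by (apply Rmult_le_compat; auto).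
  assert (Rabs (p u) * Rabs (k u - q u) <= B2 * (K2 * u ^ n)) by (apply Rmult_le_compat; auto).
  nra.
Qed.

Variable v : nat -> R.

Lemma approx_firstn h S : approx h (ser_eval v S) -> approx h (ser_eval v (firstn n S)).
Proof.
  intros [K HK]. destruct (horner_bounded (skipn n (map (poly_eval v) S))) as [B HB].
  exists (K + B). generalize (near0_and _ _ HK HB). apply near0_mono. intros u Hu [E Hs].
  unfold ser_eval in *. rewrite <- firstn_map.
  rewrite (horner_split n (map (poly_eval v) S)) in E.
  set (A := horner (firstn n (map (poly_eval v) S)) u) in *.
  set (Z := horner (skipn n (map (poly_eval v) S)) u) in *.
  replace (h u - A) with ((h u - (A + u ^ n * Z)) + u ^ n * Z) by ring.
  eapply Rle_trans; [apply Rabs_triang|]. rewrite Rabs_mult.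
  pose proof (pow_le u n ltac:(lra)). rewrite (Rabs_right (u ^ n)) by lra.
  assert (u ^ n * Rabs Z <= u ^ n * B) by (apply Rmult_le_compat_l; lra).
  lra.
Qed.

Lemma approx_ser_add h k S T : approx h (ser_eval v S) -> approx k (ser_eval v T) ->
  approx (fun u => h u + k u) (ser_eval v (ser_add S T)).
Proof.
  intros H1 H2. apply (approx_congr_r _ _ _ (fun u => eq_sym (ser_eval_add v S T u))).
  now apply approx_add.
Qed.

Lemma approx_ser_scale c h S : approx h (ser_eval v S) ->
  approx (fun u => poly_eval v c * h u) (ser_eval v (ser_scale c S)).
Proof.
  intros H. apply (approx_congr_r _ _ _ (fun u => eq_sym (ser_eval_scale v c S u))).
  now apply approx_scale.
Qed.

Lemma approx_ser_sub h k S T : approx h (ser_eval v S) -> approx k (ser_eval v T) ->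
  approx (fun u => h u - k u) (ser_eval v (ser_sub S T)).
Proof.
  intros H1 H2. apply (approx_congr_r _ _ _ (fun u => eq_sym (ser_eval_sub v S T u))).
  now apply approx_sub.
Qed.

Lemma approx_ser_mul_trunc h k S T : approx h (ser_eval v S) -> approx k (ser_eval v T) ->
  approx (fun u => h u * k u) (ser_eval v (ser_mul_trunc n S T)).
Proof.
  intros H1 H2. apply approx_firstn.
  apply (approx_congr_r _ _ _ (fun u => eq_sym (ser_eval_mul v S T u))).
  apply approx_mul; try easy.
  - apply (approx_bounded _ _ H2), horner_bounded.
  - apply horner_bounded.
Qed.


Lemma approx_ser_const c : approx (fun _ => poly_eval v c) (ser_eval v [c]).
Proof.
  apply (approx_congr_r _ (fun _ => poly_eval v c)); [intros u; cbn; ring | apply approx_refl].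
Qed.

Lemma approx_ser_comp A h S : approx h (ser_eval v S) ->
  approx (fun u => horner (map (poly_eval v) A) (h u)) (ser_eval v (ser_comp n A S)).
Proof.
  intros H. induction A as [|c A IH]; cbn [ser_comp fold_right map horner].
  - exact (approx_refl (fun _ => 0)).
  - apply approx_ser_add; [apply approx_ser_const | now apply approx_ser_mul_trunc].
Qed.

Hypothesis n_pos : (0 < n)%nat.

Lemma approx_ser_inv h S I : approx h (ser_eval v S) -> ser_is_one (ser_mul_trunc n S I) = true ->
  approx (fun u => / h u) (ser_eval v I).
Proof.
  intros H Hone.
  destruct (approx_ser_mul_trunc _ _ _ _ H (approx_refl (ser_eval v I))) as [K HK].
  destruct (horner_bounded (map (poly_eval v) I)) as [B HB].
  exists (2 * B * Rabs K).
  generalize (near0_and _ _ HK (near0_and _ _ HB (near0_pow_small n K (/ 2) n_pos ltac:(lra)))).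
  apply near0_mono. intros u Hu [E [HI Hs]].
  rewrite (ser_eval_is_one _ _ _ Hone) in E. change (horner _ u) with (ser_eval v I u) in HI.
  set (y := ser_eval v I u) in *.
  pose proof (pow_le u n ltac:(lra)).
  assert (Hk : Rabs (h u * y - 1) <= Rabs K * u ^ n).
  { eapply Rle_trans; [exact E|]. apply Rmult_le_compat_r; [easy | apply Rle_abs]. }
  assert (Hp : / 2 <= Rabs (h u * y)).
  { pose proof (Rabs_triang_inv 1 (1 - h u * y)) as Ht.
    replace (1 - (1 - h u * y)) with (h u * y) in Ht by ring.
    rewrite Rabs_R1, Rabs_minus_sym in Ht. lra. }
  assert (Hh : h u <> 0) by (intros E0; rewrite E0, Rmult_0_l, Rabs_R0 in Hp; lra).
  assert (Hy : y <> 0) by (intros E0; rewrite E0, Rmult_0_r, Rabs_R0 in Hp; lra).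
  replace (/ h u - y) with ((1 - h u * y) * (y * / (h u * y))) by (field; auto).
  rewrite Rabs_mult, Rabs_mult, Rabs_inv, Rabs_minus_sym.
  assert (Hq : Rabs y * / Rabs (h u * y) <= 2 * B).
  { apply (Rmult_le_reg_r (Rabs (h u * y))); [lra|].
    rewrite Rmult_assoc, Rinv_l by lra. pose proof (Rabs_pos y).
    assert (0 <= B * (2 * Rabs (h u * y) - 1)) by (apply Rmult_le_pos; lra). lra. }
  assert (0 <= Rabs y * / Rabs (h u * y))
    by (apply Rmult_le_pos; [apply Rabs_pos | apply Rlt_le, Rinv_0_lt_compat; lra]).
  pose proof (Rabs_pos (h u * y - 1)).
  assert (Rabs (h u * y - 1) * (Rabs y * / Rabs (h u * y)) <= Rabs K * u ^ n * (2 * B))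
    by (apply Rmult_le_compat; auto).
  lra.
Qed.

Lemma approx_head_zero w W : approx w (ser_eval v W) -> ser_head_zero W = true ->
  exists L, near0 (fun u => Rabs (w u) <= L * u).
Proof.
  destruct W as [|[|] W]; try discriminate. intros [K HK] _.
  destruct (horner_bounded (map (poly_eval v) W)) as [B HB].
  exists (B + Rabs K). generalize (near0_and _ _ HK (near0_and _ _ HB (near0_lt 1 Rlt_0_1))).
  apply near0_mono. intros u Hu [E [HW Hu1]].
  unfold ser_eval in E; cbn [map horner] in E. rewrite poly_eval_nil, Rplus_0_l in E.
  set (y := horner (map (poly_eval v) W) u) in *.
  replace (w u) with ((w u - u * y) + u * y) by ring.
  eapply Rle_trans; [apply Rabs_triang|]. rewrite Rabs_mult, (Rabs_right u) by lra.
  pose proof (pow_le_self u n ltac:(lra) n_pos). pose proof (pow_le u n ltac:(lra)).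
  pose proof (Rle_abs K). pose proof (Rabs_pos K).
  assert (K * u ^ n <= Rabs K * u) by nra.
  assert (u * Rabs y <= u * B) by (apply Rmult_le_compat_l; lra).
  lra.
Qed.

Definition even_approx (g p : R -> R) : Prop :=
  exists K d, 0 < d /\ forall w, Rabs w < d -> Rabs (g w - p (w * w)) <= K * Rabs w ^ n.

Lemma even_approx_of_approx g p d : 0 < d -> (forall w, 0 < w < d -> g (- w) = g w) ->
  g 0 = p 0 -> approx g (fun u => p (u * u)) -> even_approx g p.
Proof.
  intros Hd Heven H0 [K [d1 [Hd1 H]]]. exists K, (Rmin d d1).
  split; [now apply Rmin_pos|]. intros w Hw.
  pose proof (Rmin_l d d1); pose proof (Rmin_r d d1).
  destruct (Rtotal_order w 0) as [Hneg|[->|Hpos]].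
  - rewrite (Rabs_left w Hneg) in *.
    rewrite <- (Ropp_involutive w) at 1. rewrite Heven by lra.
    replace (w * w) with (- w * - w) by ring. apply H; lra.
  - rewrite Rabs_R0, pow_i by lia. rewrite Rmult_0_l, H0, Rminus_diag, Rabs_R0. lra.
  - rewrite (Rabs_right w) in * by lra. apply H; lra.
Qed.

Lemma approx_even_comp g p w q W : even_approx g p -> approx w (ser_eval v W) ->
  ser_head_zero W = true -> approx (fun u => p (w u * w u)) q -> approx (fun u => g (w u)) q.
Proof.
  intros [K [d [Hd HG]]] Hw Hz [K2 H2].
  destruct (approx_head_zero _ _ Hw Hz) as [L HL].
  pose proof (Rabs_pos L).
  assert (Hsmall : near0 (fun u => u < d / (Rabs L + 1)))
    by (apply near0_lt, Rdiv_lt_0_compat; lra).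
  exists (Rabs K * Rabs L ^ n + K2).
  generalize (near0_and _ _ HL (near0_and _ _ H2 Hsmall)).
  apply near0_mono. intros u Hu [Hb [E Hud]].
  assert (Hwu : Rabs (w u) <= Rabs L * u)
    by (eapply Rle_trans; [exact Hb | apply Rmult_le_compat_r; [lra | apply Rle_abs]]).
  assert (Hwd : Rabs (w u) < d).
  { apply (Rmult_lt_compat_r (Rabs L + 1)) in Hud; [|lra].
    unfold Rdiv in Hud. rewrite Rmult_assoc, Rinv_l in Hud by lra. nra. }
  specialize (HG _ Hwd).
  replace (g (w u) - q u) with ((g (w u) - p (w u * w u)) + (p (w u * w u) - q u)) by ring.
  eapply Rle_trans; [apply Rabs_triang|].
  assert (Hpow : Rabs (w u) ^ n <= Rabs L ^ n * u ^ n).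
  { rewrite <- Rpow_mult_distr. apply pow_incr. split; [apply Rabs_pos | easy]. }
  pose proof (pow_le (Rabs (w u)) n (Rabs_pos _)). pose proof (Rle_abs K). pose proof (Rabs_pos K).
  assert (K * Rabs (w u) ^ n <= Rabs K * (Rabs L ^ n * u ^ n)) by nra.
  lra.
Qed.

Lemma approx_coef_zero h P Q : approx h (ser_eval v P) -> approx h (ser_eval v Q) ->
  forall k, (k < n)%nat -> poly_eval v (nth k (ser_sub P Q) []) = 0.
Proof.
  intros [K1 H1] [K2 H2] k Hk.
  rewrite <- map_nth, poly_eval_nil. apply (horner_coef_zero n _ (K1 + K2)); [|easy].
  generalize (near0_and _ _ H1 H2). apply near0_mono. intros u _ [E1 E2].
  change (horner _ u) with (ser_eval v (ser_sub P Q) u). rewrite ser_eval_sub.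
  replace (ser_eval v P u - ser_eval v Q u)
    with ((h u - ser_eval v Q u) + - (h u - ser_eval v P u)) by ring.
  eapply Rle_trans; [apply Rabs_triang|]. rewrite Rabs_Ropp. lra.
Qed.

End Approximation.

(** * Series of a homogeneous mean *)

Lemma homogeneous_mean_profile M a b : homogeneous_mean M -> 0 < a -> 0 < b ->
  M a b = (a + b) / 2 * M (1 - (b - a) / (a + b)) (1 + (b - a) / (a + b)).
Proof.
  intros Hh Ha Hb. rewrite <- Hh.
  - f_equal; field; lra.
  - lra.
  - replace (1 - (b - a) / (a + b)) with (2 * a / (a + b)) by (field; lra).
    apply Rdiv_lt_0_compat; lra.
  - replace (1 + (b - a) / (a + b)) with (2 * b / (a + b)) by (field; lra).
    apply Rdiv_lt_0_compat; lra.
Qed.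

Definition ser_center (S T : ser) : ser := ser_scale (poly_const (1#2)) (ser_add S T).

Definition ser_slope (n : nat) (S T : ser) : ser :=
  ser_scale (poly_const (1#2)) (ser_mul_trunc n (ser_sub T S) (ser_inv n (ser_center S T))).

(* [M a b = c * g w] with [c = (a + b) / 2], [w = (b - a) / (a + b)], [g w = A (w ^ 2)]. *)
Definition ser_mean (n : nat) (A S T : ser) : ser :=
  let W := ser_slope n S T in
  ser_mul_trunc n (ser_center S T) (ser_comp n A (ser_mul_trunc n W W)).

Definition ser_mean_certified (n : nat) (S T : ser) : bool :=
  ser_is_one (ser_mul_trunc n (ser_center S T) (ser_inv n (ser_center S T)))
  && ser_head_zero (ser_slope n S T).

Lemma Q2R_half : Q2R (1#2) = / 2.
Proof. unfold Q2R; cbn [Qnum Qden]. field. Qed.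

Lemma approx_ser_mean n M v A al be S T : (0 < n)%nat -> homogeneous_mean M ->
  even_approx n (fun w => M (1 - w) (1 + w)) (horner (map (poly_eval v) A)) ->
  approx n al (ser_eval v S) -> approx n be (ser_eval v T) ->
  near0 (fun u => 0 < al u /\ 0 < be u) -> ser_mean_certified n S T = true ->
  approx n (fun u => M (al u) (be u)) (ser_eval v (ser_mean n A S T)).
Proof.
  intros Hn Hh HA Ha Hb Hpos [Hone Hz]%andb_prop.
  pose proof (approx_ser_scale n v (poly_const (1#2)) _ _ (approx_ser_add n v _ _ _ _ Ha Hb))
    as Hc.
  pose proof (approx_ser_inv n v Hn _ _ _ Hc Hone) as Hci.
  pose proof (approx_ser_scale n v (poly_const (1#2)) _ _
    (approx_ser_mul_trunc n v _ _ _ _ (approx_ser_sub n v _ _ _ _ Hb Ha) Hci)) as Hw.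
  pose proof (approx_even_comp n v Hn _ _ _ _ _ HA Hw Hz
    (approx_ser_comp n v A _ _ (approx_ser_mul_trunc n v _ _ _ _ Hw Hw))) as Hg.
  refine (approx_congr_l n _ _ _ _ (approx_ser_mul_trunc n v _ _ _ _ Hc Hg)).
  revert Hpos; apply near0_mono. intros u _ [Hau Hbu]. cbv beta.
  rewrite poly_eval_const, Q2R_half, (homogeneous_mean_profile M (al u) (be u)) by easy.
  replace (/ 2 * ((be u - al u) * / (/ 2 * (al u + be u)))) with ((be u - al u) / (al u + be u))
    by (field; lra).
  unfold Rdiv; ring.
Qed.

(** * The stability identity to order 10 *)

(* [poly_var i] stands for the coefficient [a (i + 1)] of the expansion. *)
Definition profile_ser : ser := [poly_const 1; poly_var 0; poly_var 1; poly_var 2; poly_var 3].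
Definition diag_ser : ser := ser_spread profile_ser.
Definition left_ser : ser := [poly_const 1; poly_const (-1)].
Definition right_ser : ser := [poly_const 1; poly_const 1].
Definition stab_left_ser : ser := ser_mean 10 profile_ser left_ser diag_ser.
Definition stab_right_ser : ser := ser_mean 10 profile_ser diag_ser right_ser.
Definition stab_ser : ser := ser_mean 10 profile_ser stab_left_ser stab_right_ser.
Definition stability_defect : ser := ser_sub diag_ser stab_ser.

Lemma stab_ser_certified :
  ser_mean_certified 10 left_ser diag_ser = true /\
  ser_mean_certified 10 diag_ser right_ser = true /\
  ser_mean_certified 10 stab_left_ser stab_right_ser = true.
Proof. split; [|split]; vm_compute; reflexivity. Qed.

Lemma ser_eval_left v u : ser_eval v left_ser u = 1 - u.
Proof.
  unfold ser_eval, left_ser; cbn [map horner]. rewrite !poly_eval_const, RMicromega.Q2R_1.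
  unfold Q2R; cbn [Qnum Qden]. field.
Qed.

Lemma ser_eval_right v u : ser_eval v right_ser u = 1 + u.
Proof.
  unfold ser_eval, right_ser; cbn [map horner]. rewrite !poly_eval_const, RMicromega.Q2R_1. ring.
Qed.

Local Ltac expand_coefficient H :=
  match type of H with
  | poly_eval _ (nth ?k ?D []) = 0 =>
      let E := eval vm_compute in (nth k D []) in
      replace (nth k D []) with E in H by (vm_compute; reflexivity);
      unfold poly_eval, Q2R in H; cbn [fold_right fst snd mono_eval pow Qnum Qden] in H
  end.

(* The coefficient of u^(2k) is affine in a_k once a1, ..., a_(k-1) are fixed, with leading
   coefficient 3/8, 15/32, 63/128 for k = 2, 3, 4; so they are solved one after the other. *)
Lemma stability_defect_solve v :
  poly_eval v (nth 4 stability_defect []) = 0 ->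
  poly_eval v (nth 6 stability_defect []) = 0 ->
  poly_eval v (nth 8 stability_defect []) = 0 ->
  v 1%nat = / 6 * v 0%nat * (1 + v 0%nat) * (1 - 4 * v 0%nat) /\
  v 2%nat = / 90 * v 0%nat * (1 + v 0%nat)
              * (6 - 31 * v 0%nat + 36 * v 0%nat ^ 2 + 64 * v 0%nat ^ 3) /\
  v 3%nat = / 2520 * v 0%nat * (1 + v 0%nat)
              * (90 - 531 * v 0%nat + 937 * v 0%nat ^ 2 + 568 * v 0%nat ^ 3
                 - 3088 * v 0%nat ^ 4 - 2176 * v 0%nat ^ 5).
Proof.
  intros H4 H6 H8. expand_coefficient H4. expand_coefficient H6. expand_coefficient H8.
  assert (A2 : v 1%nat = / 6 * v 0%nat * (1 + v 0%nat) * (1 - 4 * v 0%nat)) by lra.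
  rewrite A2 in H6, H8.
  assert (A3 : v 2%nat = / 90 * v 0%nat * (1 + v 0%nat)
                 * (6 - 31 * v 0%nat + 36 * v 0%nat ^ 2 + 64 * v 0%nat ^ 3)) by lra.
  rewrite A3 in H8. repeat split; [exact A2 | exact A3 | lra].
Qed.

(** * Stable means *)

Lemma powerRZ_1_sub_double x k : x <> 0 -> powerRZ x (1 - 2 * Z.of_nat k) = x / x ^ (2 * k).
Proof.
  intros Hx. replace (1 - 2 * Z.of_nat k)%Z with (1 + - Z.of_nat (2 * k))%Z by lia.
  rewrite powerRZ_add, powerRZ_neg', <- pow_powerRZ by easy. simpl. unfold Rdiv; ring.
Qed.

Section StableMean.

Variable M : R -> R -> R.
Variable a : nat -> R.
Hypothesis M_mean : is_mean M.
Hypothesis M_sym : symmetric_mean M.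
Hypothesis M_hom : homogeneous_mean M.
Hypothesis M_stable : stable_mean M.
Hypothesis M_expansion : has_sym_asymp_expansion M a.

Definition profile (w : R) : R := M (1 - w) (1 + w).

Definition higher_coef (i : nat) : R := a (S i).

Lemma profile_bounds u : 0 <= u < 1 -> 1 - u <= profile u <= 1 + u.
Proof.
  intros Hu. destruct (M_mean (1 - u) (1 + u)) as [_ [Hmin Hmax]]; try lra.
  rewrite Rmin_left in Hmin by lra. rewrite Rmax_right in Hmax by lra. now split.
Qed.

Lemma profile_even w : 0 < w < 1 -> profile (- w) = profile w.
Proof.
  intros Hw. unfold profile. rewrite !Rminus_def, !Ropp_involutive. apply M_sym; lra.
Qed.

Lemma profile_expansion N :
  approx (2 * N) profile (fun u => sum_f_R0 (fun k => a k * u ^ (2 * k)) N).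
Proof.
  destruct (M_expansion 1 N 1 Rlt_0_1) as [X HX].
  pose proof (Rabs_pos X). pose proof (Rle_abs X).
  exists 1. exists (/ (Rabs X + 2)). split; [apply Rinv_0_lt_compat; lra|].
  intros u Hu. set (x := / u).
  assert (Hx : Rabs X + 2 < x).
  { unfold x. rewrite <- (Rinv_inv (Rabs X + 2)).
    apply Rinv_lt_contravar; [apply Rmult_lt_0_compat|]; lra. }
  assert (Hux : u * x = 1) by (unfold x; field; lra).
  assert (Hu1 : u < 1) by nra.
  specialize (HX x ltac:(lra)).
  assert (HM : M (x - 1) (x + 1) = x * profile u).
  { unfold profile. rewrite <- M_hom by lra. f_equal; unfold x; field; lra. }
  assert (Hsum : sum_f_R0 (fun k => a k * 1 ^ (2 * k) * powerRZ x (1 - 2 * Z.of_nat k)) N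
                 = x * sum_f_R0 (fun k => a k * u ^ (2 * k)) N).
  { rewrite scal_sum. apply sum_eq. intros k _.
    rewrite pow1, powerRZ_1_sub_double by lra. unfold x. rewrite pow_inv.
    field; try split; try apply pow_nonzero; lra. }
  rewrite HM, Hsum, powerRZ_1_sub_double in HX by lra.
  replace (x / x ^ (2 * N)) with (x * u ^ (2 * N)) in HX
    by (unfold x; rewrite pow_inv; field; try split; try apply pow_nonzero; lra).
  rewrite <- Rmult_minus_distr_l, !Rabs_mult, (Rabs_right x), (Rabs_right (u ^ _)) in HX
    by (try apply Rle_ge, pow_le; lra).
  apply (Rmult_le_reg_l x); lra.
Qed.

Lemma a0_eq_1 : a 0%nat = 1.
Proof.
  destruct (profile_expansion 1) as [K HK].
  assert (E : a 0%nat - 1 = 0).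
  { apply (zero_of_near0_linear _ (Rabs K + Rabs (a 1%nat) + 1)).
    generalize (near0_and _ _ HK (near0_lt 1 Rlt_0_1)). apply near0_mono.
    intros u Hu [E Hu1]. cbn [sum_f_R0] in E.
    rewrite Nat.mul_0_r, Nat.mul_1_r, pow_O, <- Rsqr_pow2 in E. unfold Rsqr in E.
    pose proof (profile_bounds u ltac:(lra)).
    assert (Hg : Rabs (profile u - 1) <= u) by (apply Rabs_le; lra).
    replace (a 0%nat - 1)
      with (- (profile u - (a 0%nat * 1 + a 1%nat * (u * u)))
            - a 1%nat * (u * u) + (profile u - 1)) by ring.
    eapply Rle_trans; [apply Rabs_triang|].
    eapply Rle_trans; [apply Rplus_le_compat_r, Rabs_triang|].
    rewrite Rabs_Ropp, Rabs_Ropp, Rabs_mult, (Rabs_right (u * u)) by nra.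
    pose proof (Rle_abs K). pose proof (Rabs_pos K). pose proof (Rabs_pos (a 1%nat)).
    assert (Huu : 0 <= u * u <= u) by nra.
    assert (K * (u * u) <= Rabs K * u).
    { apply (Rle_trans _ (Rabs K * (u * u)));
        [apply Rmult_le_compat_r | apply Rmult_le_compat_l]; lra. }
    assert (Rabs (a 1%nat) * (u * u) <= Rabs (a 1%nat) * u) by (apply Rmult_le_compat_l; lra).
    lra. }
  lra.
Qed.

Lemma profile_approx_square :
  approx 10 profile (fun u => horner (map (poly_eval higher_coef) profile_ser) (u * u)).
Proof.
  apply (approx_drop_top 10 _ _ (a 5%nat)).
  refine (approx_congr_r 10 _ _ _ _ (profile_expansion 5)). intros u.
  unfold profile_ser; cbn [sum_f_R0 map horner Nat.mul Nat.add].
  rewrite poly_eval_const, !poly_eval_var, RMicromega.Q2R_1, a0_eq_1.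
  unfold higher_coef; ring.
Qed.

Lemma profile_even_approx :
  even_approx 10 profile (horner (map (poly_eval higher_coef) profile_ser)).
Proof.
  apply (even_approx_of_approx 10 ltac:(lia) _ _ 1 Rlt_0_1).
  - intros w Hw. now apply profile_even.
  - unfold profile_ser; cbn [map horner]. rewrite poly_eval_const, RMicromega.Q2R_1.
    pose proof (profile_bounds 0 ltac:(lra)). lra.
  - exact profile_approx_square.
Qed.

Lemma profile_approx_diag : approx 10 profile (ser_eval higher_coef diag_ser).
Proof.
  refine (approx_congr_r 10 _ _ _ _ profile_approx_square). intros u.
  unfold diag_ser. now rewrite ser_eval_spread.
Qed.

Lemma profile_approx_stab : approx 10 profile (ser_eval higher_coef stab_ser).
Proof.
  destruct stab_ser_certified as [C1 [C2 C3]].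
  assert (Hu1 : near0 (fun u => u < 1)) by apply (near0_lt 1 Rlt_0_1).
  assert (Hl : approx 10 (fun u => 1 - u) (ser_eval higher_coef left_ser))
    by (apply (approx_congr_r _ _ (fun u => 1 - u));
        [intros; now rewrite ser_eval_left | apply approx_refl]).
  assert (Hr : approx 10 (fun u => 1 + u) (ser_eval higher_coef right_ser))
    by (apply (approx_congr_r _ _ (fun u => 1 + u));
        [intros; now rewrite ser_eval_right | apply approx_refl]).
  assert (Hpos : near0 (fun u => 0 < 1 - u /\ 0 < profile u /\ 0 < 1 + u)).
  { revert Hu1; apply near0_mono. intros u Hu Hu1. pose proof (profile_bounds u ltac:(lra)). lra. }
  assert (HL : approx 10 (fun u => M (1 - u) (profile u)) (ser_eval higher_coef stab_left_ser)).
  { apply (approx_ser_mean 10 M higher_coef profile_ser _ _ left_ser diag_ser ltac:(lia) M_hom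
      profile_even_approx Hl profile_approx_diag); [|exact C1].
    revert Hpos; apply near0_mono; tauto. }
  assert (HR : approx 10 (fun u => M (profile u) (1 + u)) (ser_eval higher_coef stab_right_ser)).
  { apply (approx_ser_mean 10 M higher_coef profile_ser _ _ diag_ser right_ser ltac:(lia) M_hom
      profile_even_approx profile_approx_diag Hr); [|exact C2].
    revert Hpos; apply near0_mono; tauto. }
  assert (HS : approx 10 (fun u => M (M (1 - u) (profile u)) (M (profile u) (1 + u)))
                 (ser_eval higher_coef stab_ser)).
  { apply (approx_ser_mean 10 M higher_coef profile_ser _ _ _ _ ltac:(lia) M_hom
      profile_even_approx HL HR); [|exact C3].
    revert Hpos; apply near0_mono. intros u _ [H1 [H2 H3]].
    split; apply M_mean; lra. }
  revert HS. apply approx_congr_l. revert Hu1; apply near0_mono. intros u Hu Hu1.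
  symmetry. apply M_stable; lra.
Qed.

Lemma higher_coefficients :
  a 2%nat = / 6 * a 1%nat * (1 + a 1%nat) * (1 - 4 * a 1%nat) /\
  a 3%nat = / 90 * a 1%nat * (1 + a 1%nat)
              * (6 - 31 * a 1%nat + 36 * a 1%nat ^ 2 + 64 * a 1%nat ^ 3) /\
  a 4%nat = / 2520 * a 1%nat * (1 + a 1%nat)
              * (90 - 531 * a 1%nat + 937 * a 1%nat ^ 2 + 568 * a 1%nat ^ 3
                 - 3088 * a 1%nat ^ 4 - 2176 * a 1%nat ^ 5).
Proof.
  pose proof (approx_coef_zero 10 higher_coef _ _ _ profile_approx_diag profile_approx_stab)
    as Hcoef.
  apply (stability_defect_solve higher_coef); apply Hcoef; lia.
Qed.

End StableMean.

Lemma expansion_big_O M a : has_sym_asymp_expansion M a -> forall N t,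
  big_O_infty
    (fun x => M (x - t) (x + t)
              - sum_f_R0 (fun k => a k * t ^ (2 * k) * powerRZ x (1 - 2 * Z.of_nat k)) N)
    (fun x => powerRZ x (1 - 2 * Z.of_nat (S N))).
Proof.
  intros Hexp N t. destruct (Hexp t (S N) 1 Rlt_0_1) as [X HX].
  exists (1 + Rabs (a (S N) * t ^ (2 * S N))), X. intros x Hx.
  specialize (HX x Hx). cbn [sum_f_R0] in HX.
  set (P := powerRZ x (1 - 2 * Z.of_nat (S N))) in *.
  set (Sum := sum_f_R0 _ N) in *.
  replace (M (x - t) (x + t) - Sum)
    with ((M (x - t) (x + t) - (Sum + a (S N) * t ^ (2 * S N) * P)) + a (S N) * t ^ (2 * S N) * P)
    by ring.
  eapply Rle_trans; [apply Rabs_triang|]. rewrite Rabs_mult. lra.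
Qed.

Lemma big_O_congr f f' g X0 : (forall x, X0 < x -> f x = f' x) ->
  big_O_infty f g -> big_O_infty f' g.
Proof.
  intros E [C [X H]]. exists C, (Rmax X X0). intros x Hx.
  pose proof (Rmax_l X X0); pose proof (Rmax_r X X0).
  rewrite <- E by lra. apply H; lra.
Qed.

Theorem mainTheorem4 (M : R -> R -> R) (a : nat -> R) :
  is_mean M -> symmetric_mean M -> homogeneous_mean M -> stable_mean M ->
  has_sym_asymp_expansion M a ->
  forall t : R,
    big_O_infty
      (fun x => M (x - t) (x + t)
         - (x + a 1%nat * t ^ 2 / x
            + / 6 * a 1%nat * (1 + a 1%nat) * (1 - 4 * a 1%nat) * t ^ 4 / x ^ 3
            + / 90 * a 1%nat * (1 + a 1%nat)
                * (6 - 31 * a 1%nat + 36 * a 1%nat ^ 2 + 64 * a 1%nat ^ 3) * t ^ 6 / x ^ 5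
            + / 2520 * a 1%nat * (1 + a 1%nat)
                * (90 - 531 * a 1%nat + 937 * a 1%nat ^ 2 + 568 * a 1%nat ^ 3
                   - 3088 * a 1%nat ^ 4 - 2176 * a 1%nat ^ 5) * t ^ 8 / x ^ 7))
      (fun x => powerRZ x (-9)).
Proof.
  intros Hmean Hsym Hhom Hstab Hexp t.
  destruct (higher_coefficients M a Hmean Hsym Hhom Hstab Hexp) as [A2 [A3 A4]].
  pose proof (a0_eq_1 M a Hmean Hhom Hexp) as A0.
  refine (big_O_congr _ _ _ 0 _ (expansion_big_O M a Hexp 4 t)).
  intros x Hx. cbn [sum_f_R0]. rewrite !powerRZ_1_sub_double by lra.
  cbn [Nat.mul Nat.add]. rewrite A0, A2, A3, A4. field. lra.
Qed.
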